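(* Let $K$ be a clique simplicial complex, $X\cup Y=K_0$ a cover of its vertex set, $A:=X\cap Y$, and $P:=\{\sigma\in K\mid\sigma\subset X\text{ or }\sigma\subset Y\text{ or }\sigma\cap A\neq\emptyset\}$. Assume one of the following: (1) $A$ is nonempty and, for every edge $\tau\in K_1\setminus P$ and every subset $\mu\subset A$ with $|\mu|\le2$, the union $\tau\cup\mu$ is a simplex of $K$; (2) $A=\{v\}$ and, for every edge $\tau\in K_1\setminus P$, the set $\tau\cup\{v\}$ is a simplex of $K$. Then the inclusion $K_X\cup K_Y\hookrightarrow K$ is a weak equivalence.
   Context: A simplicial complex is a collection of finite nonempty subsets of a fixed set closed under taking nonempty subsets; $K_0$ is its vertex set, $K_1$ its set of edges, $K_B$ the subcomplex of simplices contained in $B$. $K$ is clique if a set with at least two elements is a simplex iff all its two-element subsets are simplices. Homotopical notions refer to geometric realizations. *)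

From HB Require Import structures.
From mathcomp Require Import all_boot all_order all_algebra.
From mathcomp Require Import finmap.
From mathcomp Require Import all_classical all_reals all_analysis.
Unset Printing Implicit Defensive.
Import Order.TTheory GRing.Theory Num.Theory.
Import numFieldNormedType.Exports.
Local Open Scope classical_set_scope.
Local Open Scope ring_scope.

Definition is_simplicial_complex {V : choiceType} (K : set {fset V}) : Prop :=
  (forall s, K s -> s != fset0) /\
  (forall s t : {fset V}, K s -> (t `<=` s)%fset -> t != fset0 -> K t).

Definition vertices {V : choiceType} (K : set {fset V}) : set V :=
  [set v | K [fset v]%fset].

Definition edges {V : choiceType} (K : set {fset V}) : set {fset V} :=
  [set s | K s /\ #|` s|%fset = 2%N].

Definition is_clique {V : choiceType} (K : set {fset V}) : Prop :=
  forall s : {fset V}, (2 <= #|` s|%fset)%N ->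
    (K s <-> forall t : {fset V}, (t `<=` s)%fset -> #|` t|%fset = 2%N -> K t).

Definition full_sub {V : choiceType} (K : set {fset V}) (B : set V)
  : set {fset V} := [set s | K s /\ (forall v, v \in s -> B v)].

(* Points of |K| are functions a : V -> R (barycentric coordinates).
   The closed geometric simplex of a finite set s: *)
Definition geom_simplex {R : realType} {V : choiceType} (s : {fset V})
  : set {ptws V -> R} :=
  [set a | (forall v, 0 <= a v) /\ (forall v, v \notin s -> a v = 0) /\
           \sum_(v <- s) a v = 1].

Definition realization {R : realType} {V : choiceType} (K : set {fset V})
  : set {ptws V -> R} :=
  [set a | exists2 s, K s & geom_simplex s a].

(* Open sets of |K| for the standard (coherent / weak) topology: U is open
   iff its trace on each closed simplex |s| (s in K) is open in |s| for the
   Euclidean topology of |s|; the latter is the subspace topology induced by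
   the product topology of V -> R (on |s| only finitely many coordinates
   are nonzero). *)
Definition realization_open {R : realType} {V : choiceType}
  (K : set {fset V}) (U : set {ptws V -> R}) : Prop :=
  U `<=` realization K /\
  forall s, K s -> exists2 W : set {ptws V -> R}, open W &
      W `&` geom_simplex s = U `&` geom_simplex s.

Definition cont_into {R : realType} {V : choiceType} (K : set {fset V})
  {T : topologicalType} (D : set T) (f : T -> {ptws V -> R}) : Prop :=
  (forall x, D x -> realization K (f x)) /\
  forall U, realization_open K U ->
    exists2 W : set T, open W & W `&` D = (f @^-1` U) `&` D.

Definition unit_interval (R : realType) : set R := [set t | 0 <= t <= 1].

Definition cube (R : realType) (n : nat) : set {ptws 'I_n -> R} :=
  [set x | forall i, 0 <= x i <= 1].

Definition cube_boundary (R : realType) (n : nat) : set {ptws 'I_n -> R} :=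
  [set x | cube R n x /\ exists i, x i = 0 \/ x i = 1].

(* representatives of pi_n(|K|, x0): maps (I^n, dI^n) -> (|K|, x0) *)
Definition sphere_map {R : realType} {V : choiceType} (K : set {fset V})
  (n : nat) (x0 : {ptws V -> R}) (f : {ptws 'I_n -> R} -> {ptws V -> R}) : Prop :=
  cont_into K (cube R n) f /\ (forall x, cube_boundary R n x -> f x = x0).

Definition rel_homotopic {R : realType} {V : choiceType} (K : set {fset V})
  (n : nat) (x0 : {ptws V -> R}) (f g : {ptws 'I_n -> R} -> {ptws V -> R}) : Prop :=
  exists H : {ptws 'I_n -> R} * R -> {ptws V -> R},
    cont_into K (cube R n `*` unit_interval R) H /\
    (forall x, cube R n x -> H (x, 0) = f x) /\
    (forall x, cube R n x -> H (x, 1) = g x) /\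
    (forall x t, cube_boundary R n x -> unit_interval R t -> H (x, t) = x0).

Definition path_connected_in {R : realType} {V : choiceType}
  (K : set {fset V}) (a b : {ptws V -> R}) : Prop :=
  exists p : R -> {ptws V -> R}, cont_into K (unit_interval R) p /\
    p 0 = a /\ p 1 = b.

(* The inclusion |L| -> |K| of a subcomplex L of K is a weak (homotopy)
   equivalence: bijection on pi_0, and for every n >= 1 and every base point
   x0 in |L|, the induced map pi_n(|L|,x0) -> pi_n(|K|,x0) is a bijection
   (it is a group homomorphism, hence then an isomorphism). *)
Definition inclusion_weak_equivalence (R : realType) {V : choiceType}
  (L K : set {fset V}) : Prop :=
  (forall b : {ptws V -> R}, realization K b ->
     exists2 a, realization L a & path_connected_in K a b) /\
  (forall a b : {ptws V -> R}, realization L a -> realization L b ->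
     path_connected_in K a b -> path_connected_in L a b) /\
  (forall n (x0 : {ptws V -> R}) f, (0 < n)%N -> realization L x0 -> sphere_map K n x0 f ->
     exists2 g, sphere_map L n x0 g & rel_homotopic K n x0 g f) /\
  (forall n (x0 : {ptws V -> R}) f g, (0 < n)%N -> realization L x0 ->
     sphere_map L n x0 f -> sphere_map L n x0 g ->
     rel_homotopic K n x0 f g -> rel_homotopic L n x0 f g).

(* Fix a vertex v of A = X \cap Y.  For a point a of |K| let p and q be the total
   weights that a puts on X \ Y and on Y \ X, and m = min(p, q).  The retraction r takes
   weight m off each of the two sides, proportionally to a, and puts 2m on v, so that r(a)
   has no weight left on one side and lies in |K_X| or |K_Y|.  This needs s \cup {v} to be
   a simplex whenever s meets both X \ Y and Y \ X.  By the clique property it suffices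
   that each {w, v} with w in s is an edge, and {w, v} lies in the simplex tau \cup mu
   given by the hypothesis for a suitable edge tau of s from X \ Y to Y \ X (such an edge
   is not in P).  As r fixes |K_X \cup K_Y| and the straight-line homotopy from r to the
   identity stays in the simplex s \cup {v}, K_X \cup K_Y is a strong deformation retract
   of K.  Continuity for the coherent topology is checked simplex by simplex, using the
   compactness of [0, 1] for the homotopy. *)

From HB Require Import structures.
From mathcomp Require Import all_boot all_order all_algebra.
From mathcomp Require Import finmap.
From mathcomp Require Import all_classical all_reals all_analysis.
From mathcomp Require Import lra.
Import Order.TTheory GRing.Theory Num.Theory.
Import numFieldNormedType.Exports.
Local Open Scope classical_set_scope.
Local Open Scope ring_scope.
Set Implicit Arguments.
Unset Strict Implicit.

Section GeomSimplex.
Variables (R : realType) (V : choiceType).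
Local Notation T := {ptws V -> R}.

Lemma sum_fset_incl (s1 s2 : {fset V}) (P : pred V) (a : T) :
  (s1 `<=` s2)%fset -> (forall w, w \in s2 -> w \notin s1 -> a w = 0) ->
  \sum_(u <- s1 | P u) a u = \sum_(u <- s2 | P u) a u.
Proof.
move=> s12 a0; rewrite big_mkcond [RHS]big_mkcond; apply: big_fset_incl => //.
by move=> w /a0 h /h ->; case: (P w).
Qed.

Lemma geom_simplex_fsubset (a : T) s s' :
  geom_simplex s a -> (s `<=` s')%fset -> geom_simplex s' a.
Proof.
move=> [a0 [aout a1]] ss'; split => //; split.
  by move=> w ws'; apply: aout; apply: contraNN ws'; apply/fsubsetP.
by rewrite -a1 -(sum_fset_incl xpredT ss') // => w _; apply: aout.
Qed.

Lemma geom_simplex_face (a : T) s (P : pred V) : geom_simplex s a ->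
  (forall w, w \in s -> ~~ P w -> a w = 0) -> geom_simplex [fset w in s | P w]%fset a.
Proof.
move=> [a0 [aout a1]] aP; split => //; split.
  move=> w; rewrite !inE /= negb_and => /orP[/aout//|nPw].
  by have [ws|/aout//] := boolP (w \in s); exact: aP.
rewrite -a1; apply: sum_fset_incl => [|w ws]; first by apply/fsubsetP => w; rewrite !inE => /andP[].
by rewrite !inE ws /= => /aP; apply.
Qed.

Lemma geom_simplex_convex (b c : T) s t : geom_simplex s b -> geom_simplex s c ->
  0 <= t <= 1 -> geom_simplex s (fun w => (1 - t) * b w + t * c w).
Proof.
move=> [b0 [bout b1]] [c0 [cout c1]] /andP[t0 t1]; split.
  by move=> w; rewrite addr_ge0 // mulr_ge0 // subr_ge0.
split; first by move=> w ws; rewrite bout // cout // !mulr0 addr0.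
by rewrite big_split /= -!mulr_sumr b1 c1; lra.
Qed.

End GeomSimplex.

Section Convergence.
Variables (R : realType) (V : choiceType).
Local Notation T := {ptws V -> R}.
Context (Z : Type) (G : set_system Z) {FG : Filter G}.

Lemma cvg_ptwsP (f : Z -> T) (b : T) :
  f @ G --> b <-> forall w, (fun z => f z w) @ G --> b w.
Proof. exact: (@pointwise_cvgP (discrete_topology V) R (f @ G) b _). Qed.

(* The ratio [m / p] need not converge when [p0 = 0]; the product does because [x <= p]. *)
Lemma cvg_mul_ratio (x m p : Z -> R) (x0 m0 p0 : R) :
  x @ G --> x0 -> m @ G --> m0 -> p @ G --> p0 ->
  (\forall z \near G, 0 <= x z <= p z /\ 0 <= m z <= p z) -> 0 <= x0 <= p0 ->
  (fun z => x z * (m z / p z)) @ G --> x0 * (m0 / p0).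
Proof.
move=> xc mc pc near_bnd /andP[x00 x0p].
have [p00|p00] := eqVneq p0 0; last by apply: cvgM => //; apply: cvgM => //; apply: cvgV.
have x0z : x0 = 0 by apply/eqP; rewrite eq_le x00 -p00 x0p.
rewrite x0z mul0r; apply/cvgrPdist_lt => e e0.
move/cvgrPdist_lt: xc => /(_ e e0); rewrite x0z; apply: filter_app.
apply: filterS near_bnd => z [/andP[xz _] /andP[mz mp]]; rewrite !sub0r !normrN => xe.
rewrite ger0_norm ?mulr_ge0 ?invr_ge0 ?(le_trans mz mp) //.
apply: le_lt_trans xe; rewrite ger0_norm // ler_piMr //.
have [->|pz0] := eqVneq (p z) 0; first by rewrite invr0 mulr0.
by rewrite ler_pdivrMr ?mul1r // lt_neqAle eq_sym pz0 (le_trans mz mp).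
Qed.

Lemma cvg_min (f g : Z -> R) (x y : R) : f @ G --> x -> g @ G --> y ->
  (fun z => Num.min (f z) (g z)) @ G --> Num.min x y.
Proof.
move=> fx gy; rewrite minr_absE; under eq_fun do rewrite minr_absE.
by apply: cvgMr_tmp; apply: cvgB; [exact: cvgD|apply: cvg_norm; exact: cvgB].
Qed.

Lemma near_le_imply (f g : Z -> R) (x y : R) (P : Z -> Prop) :
  f @ G --> x -> g @ G --> y -> (x <= y -> \forall z \near G, f z <= g z -> P z) ->
  \forall z \near G, f z <= g z -> P z.
Proof.
move=> fx gy hxy; have [/hxy//|yx] := leP x y.
have : \forall z \near G, 0 < f z - g z.
  apply: (@cvgr_gt _ _ _ _ (fun z => f z - g z) (x - y)); first exact: cvgB.
  by rewrite subr_gt0.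
by apply: filterS => z; rewrite subr_gt0 => /lt_geF ->.
Qed.

Lemma near_open_trace {E : topologicalType} (g : Z -> E) (b : E) (S U W : set E)
    (Q : Z -> Prop) :
  g @ G --> b -> open W -> W `&` S = U `&` S -> U b -> S b ->
  (\forall z \near G, Q z -> S (g z)) -> \forall z \near G, Q z -> U (g z).
Proof.
move=> gb oW WS Ub Sb nearS.
have Wb : W b by have : (U `&` S) b by []; rewrite -WS => -[].
have nearW : \forall z \near G, W (g z) by apply: gb; exact: open_nbhs_nbhs.
near=> z => Qz; have : (W `&` S) (g z) by split; [exact: (near nearW z)|exact: (near nearS z)].
by rewrite WS => -[].
Unshelve. all: by end_near.
Qed.

End Convergence.

Section CoherentTopology.
Variables (R : realType) (V : choiceType).
Local Notation T := {ptws V -> R}.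
Local Notation I01 := (unit_interval R).

Lemma open_trace_local {E : topologicalType} (D U : set E) :
  (forall x, D x -> U x -> exists2 N, nbhs x N & N `&` D `<=` U) ->
  exists2 W, open W & W `&` D = U `&` D.
Proof.
move=> locU; exists (\bigcup_(N in [set N | open N /\ N `&` D `<=` U]) N).
  by apply: bigcup_open => N [].
apply/seteqP; split => [y [[N [_ ND] Ny] Dy]|y [Uy Dy]]; first by split => //; apply: ND.
split => //; have [N + ND] := locU y Dy Uy; rewrite nbhsE => -[B [oB By] BN].
by exists B => //; split => // z [Bz Dz]; apply: ND; split => //; exact: BN.
Qed.

(* Continuity of [(a, t) |-> Psi a t] into [|M|] for the product of the coherent topology
   of [|K|] with the usual topology of [[0, 1]]. *)
Definition jointly_continuous (K M : set {fset V}) (Psi : T -> R -> T) :=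
  (forall a t, realization K a -> I01 t -> realization M (Psi a t)) /\
  forall U, realization_open M U -> forall a0 t0, realization K a0 -> I01 t0 ->
    U (Psi a0 t0) ->
    exists O, [/\ realization_open K O, O a0 &
      exists2 e, 0 < e & forall a t, O a -> I01 t -> `|t - t0| < e -> U (Psi a t)].

Lemma cont_into_jointly_comp (E : topologicalType) (D : set E) (K M : set {fset V}) Psi
    (g : E -> T) (tau : E -> R) :
  jointly_continuous K M Psi -> cont_into K D g -> continuous tau ->
  (forall x, D x -> I01 (tau x)) -> cont_into M D (fun x => Psi (g x) (tau x)).
Proof.
move=> [PsiM Psic] [gK gc] tauc tauI; split => [x Dx|U oU]; first exact: PsiM (gK x Dx) (tauI x Dx).
apply: open_trace_local => x Dx Ux.
have [N [oN Nx [e e0 Ne]]] := Psic U oU (g x) (tau x) (gK x Dx) (tauI x Dx) Ux.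
have [W oW WD] := gc N oN.
have Wx : W x by have : (g @^-1` N `&` D) x by []; rewrite -WD => -[].
exists (W `&` (tau @^-1` ball (tau x) e)).
  by apply: filterI; [exact: open_nbhs_nbhs|apply: tauc; exact: nbhsx_ballx].
move=> y [[Wy tauy] Dy]; have : (W `&` D) y by [].
rewrite WD => -[Ny _]; apply: Ne => //; first exact: tauI.
by move: tauy; rewrite /= -ball_normE /= distrC.
Qed.

Lemma cont_into_fst (E : topologicalType) (D : set E) (K : set {fset V}) (g : E -> T) :
  cont_into K D g -> cont_into K (D `*` I01) (fun z : E * R => g z.1).
Proof.
move=> [gK gc]; split => [z [Dz _]|U oU]; first exact: gK.
have [W oW WD] := gc U oU; apply: open_trace_local => z [Dz _] Uz.
have Wz : W z.1 by have : (g @^-1` U `&` D) z.1 by []; rewrite -WD => -[].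
exists (W `*` setT); first by exists (W, setT) => //; split; [exact: open_nbhs_nbhs|exact: filterT].
by move=> y [[Wy _] [Dy _]]; have : (W `&` D) y.1 by []; rewrite WD => -[].
Qed.

Lemma cont_into_cst (E : topologicalType) (D : set E) (K : set {fset V}) (b : T) :
  realization K b -> cont_into K D (fun=> b).
Proof.
move=> Kb; split => // U _; have [Ub|nUb] := pselect (U b).
  by exists setT; [exact: openT|apply/seteqP; split => x []].
by exists set0; [exact: open0|apply/seteqP; split => x []].
Qed.

Lemma weak_equivalence_of_deformation (L K : set {fset V}) (r : T -> T) (H : T -> R -> T) :
  jointly_continuous K L (fun a _ => r a) -> jointly_continuous K K H ->
  (forall a, H a 0 = r a) -> (forall a, H a 1 = a) ->
  (forall a t, realization L a -> H a t = a) ->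
  inclusion_weak_equivalence R L K.
Proof.
move=> rc Hc H0 H1 HL.
have rL a : realization L a -> r a = a by move=> La; rewrite -H0 HL.
have I0 : I01 0 by rewrite /unit_interval /= lexx ler01.
have retract (E : topologicalType) (D : set E) g : cont_into K D g -> cont_into L D (r \o g).
  by move=> gc; apply: (cont_into_jointly_comp rc gc (tau := fun=> 0)) => // x; exact: cvg_cst.
split; [|split; [|split]].
- move=> b Kb; exists (r b); first exact: rc.1 b 0 Kb I0.
  exists (H b); split; last by rewrite H0 H1.
  exact: (cont_into_jointly_comp Hc (cont_into_cst _ Kb) (fun t => @cvg_id _ _)).
- move=> a b La Lb [p [pc [p0 p1]]]; exists (r \o p); split; first exact: retract.
  by rewrite /= p0 p1 !rL.
- move=> n x0 f _ Lx0 [fc fb]; exists (r \o f).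
    by split => [|x bx]; [exact: retract|rewrite /= fb // rL].
  exists (fun z => H (f z.1) z.2); split.
    exact: (cont_into_jointly_comp Hc (cont_into_fst fc) (fun z => cvg_snd) (fun z h => h.2)).
  by split; [|split] => [x _|x _|x t bx _]; rewrite ?H0 ?H1 // fb // HL.
- move=> n x0 f g _ Lx0 [fc _] [gc _] [G [Gc [G0 [G1 Gb]]]].
  exists (r \o G); split; first exact: retract.
  split; first by move=> x cx; rewrite /= G0 // rL //; exact: fc.1 x cx.
  split; first by move=> x cx; rewrite /= G1 // rL //; exact: gc.1 x cx.
  by move=> x t bx It; rewrite /= Gb // rL.
Qed.

Lemma compact_unit_interval_ball (t0 d : R) : compact [set t | I01 t /\ `|t - t0| <= d].
Proof.
suff -> : [set t | I01 t /\ `|t - t0| <= d] = `[Num.max 0 (t0 - d), Num.min 1 (t0 + d)]%classic.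
  exact: segment_compact.
apply/seteqP; split => t; rewrite /= in_itv /= ge_max le_min.
  by move=> [/andP[t0' t1]]; rewrite ler_norml => /andP[h1 h2]; apply/and3P; split; lra.
move=> /andP[/andP[h1 h2] /andP[h3 h4]]; split; first by apply/andP.
by rewrite ler_norml; apply/andP; split; lra.
Qed.

Section Simplexwise.
Variables (K M : set {fset V}) (Psi : T -> R -> T).
Hypothesis Psi_simplex : forall s, K s ->
  exists2 s', M s' & forall a t, geom_simplex s a -> I01 t -> geom_simplex s' (Psi a t).
Hypothesis Psi_cvg : forall s a t, geom_simplex s a ->
  (fun z : R * T => Psi z.2 z.1) @ filter_prod (nbhs t) (within (geom_simplex s) (nbhs a))
    --> Psi a t.

Lemma near_simplexwise s a t U : K s -> geom_simplex s a -> I01 t ->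
  realization_open M U -> U (Psi a t) ->
  \forall t' \near t & a' \near within (geom_simplex s) (nbhs a), I01 t' -> U (Psi a' t').
Proof.
move=> Ks ga It [_ oU] Ut; have [s' Ms' Psis'] := Psi_simplex Ks.
have [W oW WE] := oU s' Ms'.
suff : \forall z \near filter_prod (nbhs t) (within (geom_simplex s) (nbhs a)),
  I01 z.1 -> U (Psi z.2 z.1) by [].
apply: (near_open_trace (Psi_cvg (t := t) ga) oW WE Ut (Psis' _ _ ga It)).
have : \forall z \near filter_prod (nbhs t) (within (geom_simplex s) (nbhs a)),
  geom_simplex s z.2 by apply: (cvg_snd (F := nbhs t)); exact: withinT.
by apply: filterS => z gz Iz; exact: Psis'.
Qed.

Lemma jointly_continuous_simplexwise : jointly_continuous K M Psi.
Proof.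
split=> [a t [s Ks ga] It|U oU a0 t0 [s0 Ks0 ga0] It0 Ut0].
  by have [s' Ms' Psis'] := Psi_simplex Ks; exists s'; [|exact: Psis'].
have [[B A] [/= /nbhs_ballP[e e0 Be] nA] BA] := near_simplexwise Ks0 ga0 It0 oU Ut0.
pose J := [set t | I01 t /\ `|t - t0| <= e / 2].
have e2e : e / 2 < e by rewrite ltr_pdivrMr // ltr_pMr // ltr1n.
exists [set a | realization K a /\ J `<=` (fun t => U (Psi a t))]; split.
- split=> [a []//|s Ks]; apply: open_trace_local => a ga [_ Ua].
  have tube := (near_covering_withinP J).2
    ((compact_near_coveringP J).1 (compact_unit_interval_ball (t0 := t0) (d := e / 2))).
  have : \forall a' \near within (geom_simplex s) (nbhs a), J `<=` (fun t => U (Psi a' t)).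
    apply: tube => t [It ht].
    apply: filterS (near_simplexwise Ks ga It oU (Ua t (conj It ht))).
    by move=> [t' a'] h [It' _]; exact: h.
  move=> nearJ; exists (fun a' => geom_simplex s a' -> J `<=` (fun t => U (Psi a' t))) => //.
  by move=> a' [Ja' ga']; split; [exists s|exact: Ja'].
- split=> [|t [It ht]]; first by exists s0.
  apply: (BA (t, a0)) => //; split; last exact: nbhs_singleton nA ga0.
  by apply: Be; rewrite /= -ball_normE /= distrC; exact: le_lt_trans ht e2e.
- exists (e / 2) => [|a t [_ Ja] It ht]; first by rewrite divr_gt0.
  by apply: Ja; split => //; exact: ltW.
Qed.

End Simplexwise.
End CoherentTopology.

Lemma clique_cone (V : choiceType) (K : set {fset V}) (s : {fset V}) (v : V) :
  is_simplicial_complex K -> is_clique K -> K s -> (2 <= #|` (s `|` [fset v])%fset|)%N ->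
  (forall w, w \in s -> w != v -> K [fset w; v]%fset) -> K (s `|` [fset v])%fset.
Proof.
move=> [_ Kface] Kcl Ks s2 Kwv; apply/(Kcl _ s2) => t tsv t2.
have t0 : t != fset0 by rewrite -cardfs_gt0 t2.
have [vt|nvt] := boolP (v \in t); last first.
  apply: Kface Ks _ t0; apply/fsubsetP => u ut; move/fsubsetP: tsv => /(_ u ut).
  by rewrite in_fsetU in_fset1 => /orP[//|/eqP uv]; rewrite -uv ut in nvt.
have /fsubsetPn[w wt] : ~~ (t `<=` [fset v])%fset.
  by apply/negP => /fsubset_leq_card; rewrite t2 cardfs1.
rewrite in_fset1 => wv.
have ws : w \in s by move/fsubsetP: tsv => /(_ w wt); rewrite in_fsetU in_fset1 (negbTE wv) orbF.
suff -> : t = [fset w; v]%fset by exact: Kwv.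
apply/eqP; rewrite eq_sym eqEfcard t2 cardfs2 wv andbT.
by apply/fsubsetP => u; rewrite !inE => /orP[]/eqP->.
Qed.

Section Sides.
Variables (V : choiceType) (X Y : set V).

Definition xonly (w : V) : bool := `[< X w /\ ~ Y w >].
Definition yonly (w : V) : bool := `[< Y w /\ ~ X w >].

Lemma xonlyN w : Y w -> ~~ xonly w.
Proof. by move=> Yw; apply/asboolP => -[]. Qed.

Lemma yonlyN w : X w -> ~~ yonly w.
Proof. by move=> Xw; apply/asboolP => -[]. Qed.

Lemma xonly_yonly w : xonly w -> ~~ yonly w.
Proof. by move=> /asboolP[Xw _]; exact: yonlyN. Qed.

Lemma straddling_pair_card x y : xonly x -> yonly y -> #|` [fset x; y]|%fset = 2%N.
Proof.
move=> /asboolP[Xx _] /asboolP[_ nXy]; rewrite cardfs2.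
by case: eqP => // exy; rewrite exy in Xx.
Qed.

Lemma straddling_pair_mixed x y : xonly x -> yonly y ->
  ~ ((forall w, w \in [fset x; y]%fset -> X w) \/ (forall w, w \in [fset x; y]%fset -> Y w) \/
     (exists2 w, w \in [fset x; y]%fset & (X `&` Y) w)).
Proof.
move=> /asboolP[Xx nYx] /asboolP[Yy nXy] [allX|[allY|[w + [Xw Yw]]]].
- by apply/nXy/allX; rewrite !inE eqxx orbT.
- by apply/nYx/allY; rewrite !inE eqxx.
- by rewrite !inE => /orP[]/eqP ew; [apply: nYx|apply: nXy]; rewrite -ew.
Qed.

Definition straddles (s : {fset V}) :=
  (exists2 x, x \in s & xonly x) /\ (exists2 y, y \in s & yonly y).

End Sides.

Section Mass.
Variables (R : realType) (V : choiceType).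
Local Notation T := {ptws V -> R}.

(* A finite set outside which [a] vanishes (junk [fset0] if there is none). *)
Definition fsupp (a : T) : {fset V} :=
  xget fset0 [set s : {fset V} | forall w, w \notin s -> a w = 0].

Definition mass (P : pred V) (a : T) : R := \sum_(u <- fsupp a | P u) a u.

Lemma massE (P : pred V) (a : T) (s : {fset V}) : (forall w, w \notin s -> a w = 0) ->
  mass P a = \sum_(u <- s | P u) a u.
Proof.
move=> aout; have aout' : forall w, w \notin fsupp a -> a w = 0.
  exact: (@xgetPex _ fset0 [set s : {fset V} | forall w, w \notin s -> a w = 0]
           (ex_intro _ s aout)).
rewrite /mass (sum_fset_incl P (fsubsetUr s (fsupp a))) => [|w _ /aout'//].
by rewrite [RHS](sum_fset_incl P (fsubsetUl s (fsupp a))) // => w _ /aout.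
Qed.

Lemma mass_ge0 (P : pred V) (a : T) s : geom_simplex s a -> 0 <= mass P a.
Proof. by move=> [a0 [aout _]]; rewrite (massE _ aout) sumr_ge0. Qed.

Lemma le_mass (P : pred V) (a : T) s w : geom_simplex s a -> P w -> a w <= mass P a.
Proof.
move=> [a0 [aout _]] Pw; rewrite (massE _ aout).
have [ws|/aout->] := boolP (w \in s); last exact: sumr_ge0.
rewrite big_mkcond (bigD1_seq w) ?fset_uniq //= Pw lerDl sumr_ge0 // => u _.
by case: (P u).
Qed.

Lemma mass_eq0 (P : pred V) (a : T) s : geom_simplex s a -> (forall w, w \in s -> ~~ P w) ->
  mass P a = 0.
Proof.
move=> [_ [aout _]] nP; rewrite (massE _ aout) big_seq_cond big1 // => u.
by case/andP => /nP/negbTE->.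
Qed.

Lemma ratio_ge0_le1 (m p : R) : 0 <= m <= p -> 0 <= m / p <= 1.
Proof.
move=> /andP[m0 mp]; rewrite divr_ge0 ?(le_trans m0 mp) //=.
have [->|p0] := eqVneq p 0; first by rewrite invr0 mulr0.
by rewrite ler_pdivrMr ?mul1r // lt_neqAle eq_sym p0 (le_trans m0 mp).
Qed.

(* The weight taken off [w] when a total of [m] is taken off the [P]-vertices in
   proportion to [a]. *)
Definition shrink (P : pred V) (m : R) (a : T) (w : V) : R :=
  (P w)%:R * (a w * (m / mass P a)).

Lemma shrinkF (P : pred V) m (a : T) w : ~~ P w -> shrink P m a w = 0.
Proof. by rewrite /shrink => /negbTE->; rewrite mul0r. Qed.

Lemma shrink0 (P : pred V) (a : T) w : shrink P 0 a w = 0.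
Proof. by rewrite /shrink mul0r !mulr0. Qed.

Section Bounds.
Variables (P : pred V) (m : R) (a : T) (s : {fset V}).
Hypotheses (ga : geom_simplex s a) (hm : 0 <= m <= mass P a).

Lemma shrink_le w : shrink P m a w <= a w.
Proof.
have /andP[r0 r1] := ratio_ge0_le1 hm.
by rewrite /shrink; case: (P w); rewrite ?mul0r ?mul1r ?ga.1 //; exact: ler_piMr (ga.1 w) r1.
Qed.

Lemma sum_shrink : \sum_(w <- s) shrink P m a w = m.
Proof.
rewrite (eq_bigr (fun w => (P w)%:R * a w * (m / mass P a))) => [|w _]; last first.
  by rewrite /shrink mulrA.
rewrite -mulr_suml (eq_bigr (fun w => if P w then a w else 0)) => [|w _]; last first.
  by case: (P w); rewrite ?mul1r ?mul0r.
rewrite -big_mkcond -(massE _ ga.2.1); case/andP: hm => m0 mP.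
have [M0|M0] := eqVneq (mass P a) 0; last by rewrite mulrC divfK.
by rewrite M0 mul0r; apply/eqP; rewrite eq_le m0 -M0 mP.
Qed.

End Bounds.

Lemma shrink_mass (P : pred V) (a : T) s w : geom_simplex s a -> P w ->
  shrink P (mass P a) a w = a w.
Proof.
move=> ga Pw; rewrite /shrink Pw mul1r.
have [M0|M0] := eqVneq (mass P a) 0; last by rewrite divff // mulr1.
have aw0 : a w = 0 by apply/eqP; rewrite eq_le ga.1 -M0 (le_mass ga Pw).
by rewrite aw0 mul0r.
Qed.

End Mass.

Section Retraction.
Variables (R : realType) (V : choiceType) (X Y : set V) (v : V).
Local Notation T := {ptws V -> R}.
Local Notation xonly := (xonly X Y).
Local Notation yonly := (yonly X Y).

Definition moved (a : T) : R := Num.min (mass xonly a) (mass yonly a).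

Definition retr (a : T) : T := fun w =>
  a w - shrink xonly (moved a) a w - shrink yonly (moved a) a w
    + (w == v)%:R * (2 * moved a).

Definition retr_homotopy (a : T) (t : R) : T := fun w => (1 - t) * retr a w + t * a w.

Hypotheses (Xv : X v) (Yv : Y v).

Section OnSimplex.
Variables (a : T) (s : {fset V}).
Hypothesis ga : geom_simplex s a.

Lemma moved_xonly : 0 <= moved a <= mass xonly a.
Proof. by rewrite le_min !(mass_ge0 _ ga) ge_min lexx. Qed.

Lemma moved_yonly : 0 <= moved a <= mass yonly a.
Proof. by rewrite le_min !(mass_ge0 _ ga) ge_min lexx orbT. Qed.

Lemma retr_ge0 w : 0 <= retr a w.
Proof.
have /andP[m0 _] := moved_xonly.
rewrite /retr addr_ge0 //; last by apply: mulr_ge0; [exact: ler0n|apply: mulr_ge0].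
have [xw|nxw] := boolP (xonly w).
  by rewrite (shrinkF _ _ (xonly_yonly xw)) subr0 subr_ge0 (shrink_le ga moved_xonly).
by rewrite (shrinkF _ _ nxw) subr0 subr_ge0 (shrink_le ga moved_yonly).
Qed.

Lemma retr_simplex : geom_simplex (s `|` [fset v])%fset (retr a).
Proof.
have ga' := geom_simplex_fsubset ga (fsubsetUl s [fset v]%fset).
split; first exact: retr_ge0.
split=> [w|].
  rewrite in_fsetU in_fset1 negb_or => /andP[ws /negbTE wv].
  by rewrite /retr /shrink ga.2.1 // wv !mul0r !mulr0 !subr0 addr0.
rewrite /retr !big_split /= !sumrN (sum_shrink ga' moved_xonly) (sum_shrink ga' moved_yonly).
rewrite ga'.2.2 -mulr_suml (bigD1_seq v) ?fset_uniq ?in_fsetU ?in_fset1 ?eqxx ?orbT //=.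
by rewrite big1 => [|u /negbTE->]; [lra|].
Qed.

Lemma retr_id : mass xonly a = 0 \/ mass yonly a = 0 -> retr a = a.
Proof.
move=> M0; have m0 : moved a = 0.
  have /andP[mx0 mx] := moved_xonly; have /andP[_ my] := moved_yonly.
  by apply/eqP; rewrite eq_le mx0 andbT; case: M0 => M0; [move: mx|move: my]; rewrite M0.
by apply/funext => w; rewrite /retr m0 !shrink0 !mulr0 !subr0 addr0.
Qed.

Lemma retr_yonly0 w : mass yonly a <= mass xonly a -> yonly w -> retr a w = 0.
Proof.
move=> yx yw; have m : moved a = mass yonly a by rewrite /moved min_r.
have nxw : ~~ xonly w by apply: contraTN yw; exact: xonly_yonly.
have /negbTE wv : w != v by apply: contraTneq yw => ->; exact: yonlyN.
by rewrite /retr (shrinkF _ _ nxw) m (shrink_mass ga yw) wv mul0r addr0 subr0 subrr.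
Qed.

Lemma retr_xonly0 w : mass xonly a <= mass yonly a -> xonly w -> retr a w = 0.
Proof.
move=> xy xw; have m : moved a = mass xonly a by rewrite /moved min_l.
have /negbTE wv : w != v by apply: contraTneq xw => ->; exact: xonlyN.
rewrite /retr (shrinkF _ _ (xonly_yonly xw)) m (shrink_mass ga xw) wv.
by rewrite mul0r addr0 subr0 subrr.
Qed.

Lemma retr_homotopy_simplex t : 0 <= t <= 1 ->
  geom_simplex (s `|` [fset v])%fset (retr_homotopy a t).
Proof.
by apply: geom_simplex_convex retr_simplex (geom_simplex_fsubset ga _); exact: fsubsetUl.
Qed.

Lemma retr_homotopy_id t : mass xonly a = 0 \/ mass yonly a = 0 -> retr_homotopy a t = a.
Proof. by move=> M0; apply/funext => w; rewrite /retr_homotopy retr_id //; lra. Qed.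

End OnSimplex.

Lemma retr_homotopy0 a : retr_homotopy a 0 = retr a.
Proof. by apply/funext => w; rewrite /retr_homotopy; lra. Qed.

Lemma retr_homotopy1 a : retr_homotopy a 1 = a.
Proof. by apply/funext => w; rewrite /retr_homotopy; lra. Qed.

Section Continuity.
Context (Z : Type) (G : set_system Z) {FG : Filter G} (al : Z -> T) (a : T)
  (s : {fset V}).
Hypotheses (alc : al @ G --> a) (near_ga : \forall z \near G, geom_simplex s (al z))
  (ga : geom_simplex s a).

Lemma cvg_mass (P : pred V) : (fun z => mass P (al z)) @ G --> mass P a.
Proof.
have cvg_sum : (fun z => \sum_(u <- s | P u) al z u) @ G --> \sum_(u <- s | P u) a u.
  by apply: (cvg_big (op := +%R) (x0 := 0) (P := P) add_continuous) => w _; move/cvg_ptwsP: alc.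
rewrite (massE _ ga.2.1); apply: cvg_trans cvg_sum; apply: near_eq_cvg.
by apply: filterS near_ga => z gz; rewrite (massE _ gz.2.1).
Qed.

Lemma cvg_moved : (fun z => moved (al z)) @ G --> moved a.
Proof. by apply: cvg_min; exact: cvg_mass. Qed.

Lemma cvg_shrink (P : pred V) w :
  (forall b, geom_simplex s b -> 0 <= moved b <= mass P b) ->
  (fun z => shrink P (moved (al z)) (al z) w) @ G --> shrink P (moved a) a w.
Proof.
move=> hP; rewrite /shrink; have [Pw|nPw] := boolP (P w); last first.
  by rewrite mul0r; under eq_fun do rewrite mul0r; exact: cvg_cst.
rewrite mul1r; under eq_fun do rewrite mul1r.
apply: cvg_mul_ratio; [by move/cvg_ptwsP: alc|exact: cvg_moved|exact: cvg_mass| |].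
  by apply: filterS near_ga => z gz; rewrite hP // gz.1 (le_mass gz Pw).
by rewrite ga.1 (le_mass ga Pw).
Qed.

Lemma cvg_retr : (fun z => retr (al z)) @ G --> retr a.
Proof.
apply/cvg_ptwsP => w; rewrite /retr; apply: cvgD.
  apply: cvgB; [apply: cvgB; first by move/cvg_ptwsP: alc|];
    apply: cvg_shrink => b gb; [exact: moved_xonly gb|exact: moved_yonly gb].
by do 2 apply: cvgMl_tmp; exact: cvg_moved.
Qed.

Lemma cvg_retr_homotopy (be : Z -> R) t : be @ G --> t ->
  (fun z => retr_homotopy (al z) (be z)) @ G --> retr_homotopy a t.
Proof.
move=> bt; apply/cvg_ptwsP => w; apply: cvgD; apply: cvgM => //.
- by apply: cvgB => //; exact: cvg_cst.
- by move/cvg_ptwsP: cvg_retr.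
- by move/cvg_ptwsP: alc.
Qed.

End Continuity.

End Retraction.

Section Cone.
Variables (V : choiceType) (K : set {fset V}) (X Y : set V) (v : V).
Hypotheses (HK : is_simplicial_complex K) (Hcov : X `|` Y = vertices K).

Lemma vertex_cover s w : K s -> w \in s -> X w \/ Y w.
Proof.
move=> Ks ws; have : (X `|` Y) w.
  rewrite Hcov /vertices /=; apply: HK.2 Ks _ _; last by rewrite -cardfs_gt0 cardfs1.
  by apply/fsubsetP => u; rewrite inE => /eqP ->.
by case; [left|right].
Qed.

Lemma not_straddles_side s : K s -> ~ straddles X Y s ->
  (forall w, w \in s -> X w) \/ (forall w, w \in s -> Y w).
Proof.
move=> Ks nst; have [[x xs xx]|nx] := pselect (exists2 x, x \in s & xonly X Y x).
  left => w ws; case: (vertex_cover Ks ws) => // Yw; apply: contra_notP nst => nXw.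
  by split; [exists x|exists w => //; apply/asboolP].
right => w ws; case: (vertex_cover Ks ws) => // Xw; apply: contra_notP nx => nYw.
by exists w => //; apply/asboolP.
Qed.

Hypotheses (Hcl : is_clique K) (Xv : X v) (Yv : Y v).
Hypothesis cone_straddling_edge : forall x y w, xonly X Y x -> yonly X Y y ->
  K [fset x; y]%fset -> (X `&` Y) w -> K ([fset x; y] `|` [fset w; v])%fset.

Lemma straddling_cone s : K s -> straddles X Y s -> K (s `|` [fset v])%fset.
Proof.
move=> Ks [[x xs xx] [y ys yy]].
have Kpair a b : a \in s -> b \in s -> K [fset a; b]%fset.
  move=> ha hb; apply: HK.2 Ks _ _; first by apply/fsubsetP => u; rewrite !inE => /orP[]/eqP->.
  by apply/eqP => /fsetP/(_ a); rewrite !inE eqxx.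
apply: clique_cone => // [|w ws wv].
  rewrite -(straddling_pair_card xx yy); apply: fsubset_leq_card.
  by apply/fsubsetP => u; rewrite !inE => /orP[]/eqP->; rewrite ?xs ?ys.
have face c : K c -> ([fset w; v] `<=` c)%fset -> K [fset w; v]%fset.
  by move=> Kc wvc; apply: HK.2 Kc wvc _; apply/eqP => /fsetP/(_ w); rewrite !inE eqxx.
have Av : (X `&` Y) v by [].
have [Aw|nAw] := pselect ((X `&` Y) w).
  apply: face (cone_straddling_edge xx yy (Kpair x y xs ys) Aw) _.
  by apply/fsubsetP => u; rewrite !inE => /orP[]/eqP->; rewrite eqxx ?orbT.
case: (vertex_cover Ks ws) => [Xw|Yw].
  have xw : xonly X Y w by apply/asboolP; split => // Yw; apply: nAw.
  apply: face (cone_straddling_edge xw yy (Kpair w y ws ys) Av) _.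
  by apply/fsubsetP => u; rewrite !inE => /orP[]/eqP->; rewrite eqxx ?orbT.
have yw : yonly X Y w by apply/asboolP; split => // Xw; apply: nAw.
apply: face (cone_straddling_edge xx yw (Kpair x w xs ws) Av) _.
by apply/fsubsetP => u; rewrite !inE => /orP[]/eqP->; rewrite eqxx ?orbT.
Qed.

End Cone.

Section DeformationRetraction.
Variables (R : realType) (V : choiceType) (K : set {fset V}) (X Y : set V) (v : V).
Hypotheses (HK : is_simplicial_complex K) (Hcov : X `|` Y = vertices K)
  (Xv : X v) (Yv : Y v).
Hypothesis cone : forall s, K s -> straddles X Y s -> K (s `|` [fset v])%fset.
Local Notation T := {ptws V -> R}.
Local Notation L := (full_sub K X `|` full_sub K Y).
Local Notation xonly := (xonly X Y).
Local Notation yonly := (yonly X Y).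
Local Notation retr := (@retr R V X Y v).
Local Notation retr_homotopy := (@retr_homotopy R V X Y v).

Lemma mass_eq0_one_side s (a : T) : geom_simplex s a ->
  (forall w, w \in s -> X w) \/ (forall w, w \in s -> Y w) ->
  mass xonly a = 0 \/ mass yonly a = 0.
Proof.
move=> ga [sX|sY]; [right|left]; apply: (@mass_eq0 _ _ _ _ _ ga) => w ws.
  exact/yonlyN/sX.
exact/xonlyN/sY.
Qed.

Lemma retr_homotopy_into_K s : K s -> exists2 s', K s' &
  forall (a : T) t, geom_simplex s a -> unit_interval R t ->
    geom_simplex s' (retr_homotopy a t).
Proof.
move=> Ks; have [st|nst] := pselect (straddles X Y s).
  by exists (s `|` [fset v])%fset => [|a t ga]; [exact: cone|exact: retr_homotopy_simplex].
exists s => // a t ga _; rewrite (retr_homotopy_id v ga) //.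
exact: mass_eq0_one_side ga (not_straddles_side HK Hcov Ks nst).
Qed.

Lemma retr_sides s : K s -> exists sX sY, [/\ L sX, L sY &
  forall a : T, geom_simplex s a ->
    (mass yonly a <= mass xonly a -> geom_simplex sX (retr a)) /\
    (mass xonly a <= mass yonly a -> geom_simplex sY (retr a))].
Proof.
move=> Ks; have [st|nst] := pselect (straddles X Y s); last first.
  have Ls : L s by case: (not_straddles_side HK Hcov Ks nst) => sZ; [left|right].
  exists s, s; split => // a ga.
  by rewrite (retr_id v ga) //; exact: mass_eq0_one_side ga (not_straddles_side HK Hcov Ks nst).
have Ksv := cone Ks st.
have side (Z : set V) : Z v -> full_sub K Z [fset w in (s `|` [fset v])%fset | `[< Z w >]]%fset.
  move=> Zv; split => [|w]; last by rewrite !inE => /andP[_ /asboolP].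
  apply: HK.2 Ksv _ _; first by apply/fsubsetP => w; rewrite !inE => /andP[].
  by apply/eqP => /fsetP/(_ v); rewrite !inE eqxx orbT /=; move/asboolP: Zv => ->.
exists [fset w in (s `|` [fset v])%fset | `[< X w >]]%fset.
exists [fset w in (s `|` [fset v])%fset | `[< Y w >]]%fset.
split; [by left; exact: side|by right; exact: side|move=> a ga].
have other w : w \in (s `|` [fset v])%fset -> (~ X w -> yonly w) /\ (~ Y w -> xonly w).
  rewrite in_fsetU in_fset1 => /orP[ws|/eqP->]; last by split.
  by split=> nZ; apply/asboolP; have := vertex_cover HK Hcov Ks ws; tauto.
have gr := retr_simplex X Y v ga.
split=> mle; apply: geom_simplex_face gr _ => w ws /asboolP nZ.
  by rewrite (retr_yonly0 Xv ga mle ((other w ws).1 nZ)).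
by rewrite (retr_xonly0 Yv ga mle ((other w ws).2 nZ)).
Qed.

Lemma retr_homotopy_fixed (a : T) t : realization L a -> retr_homotopy a t = a.
Proof.
move=> [s [[_ sX]|[_ sY]] ga]; apply: (retr_homotopy_id v ga).
  by apply: mass_eq0_one_side ga _; left.
by apply: mass_eq0_one_side ga _; right.
Qed.

Lemma retr_jointly_continuous : jointly_continuous K L (fun a _ => retr a).
Proof.
split=> [a t [s Ks ga] _|U [_ oU] a0 t0 Ka0 _ Ua0].
  have [sX [sY [LX LY retr_s]]] := retr_sides Ks.
  have [yx|/ltW xy] := leP (mass yonly a) (mass xonly a).
    by exists sX => //; exact: (retr_s a ga).1.
  by exists sY => //; exact: (retr_s a ga).2.
exists [set a | realization K a /\ U (retr a)]; split => //; last by exists 1 => // a t [].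
split=> [a []//|s Ks]; apply: open_trace_local => a ga [_ Ua].
have [sX [sY [LX LY retr_s]]] := retr_sides Ks.
pose F := within (geom_simplex s) (nbhs a).
have near_gs : \forall z \near F, geom_simplex s z by exact: withinT.
have cvg_idF : (fun z => z) @ F --> a by exact: cvg_within.
have cvg_r : retr z @[z --> F] --> retr a by exact: cvg_retr cvg_idF near_gs ga.
have cvg_mX : mass xonly z @[z --> F] --> mass xonly a by exact: cvg_mass cvg_idF near_gs ga xonly.
have cvg_mY : mass yonly z @[z --> F] --> mass yonly a by exact: cvg_mass cvg_idF near_gs ga yonly.
(* Paste along the two closed pieces of the simplex on which [retr] lands in [sX], [sY]. *)
have nearX : \forall z \near F, mass yonly z <= mass xonly z -> U (retr z).
  apply: near_le_imply cvg_mY cvg_mX _ => yx; have [W oW WE] := oU sX LX.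
  apply: near_open_trace cvg_r oW WE Ua ((retr_s a ga).1 yx) _.
  by apply: filterS near_gs => z gz; exact: (retr_s z gz).1.
have nearY : \forall z \near F, mass xonly z <= mass yonly z -> U (retr z).
  apply: near_le_imply cvg_mX cvg_mY _ => xy; have [W oW WE] := oU sY LY.
  apply: near_open_trace cvg_r oW WE Ua ((retr_s a ga).2 xy) _.
  by apply: filterS near_gs => z gz; exact: (retr_s z gz).2.
exists (fun z => geom_simplex s z -> (mass yonly z <= mass xonly z -> U (retr z)) /\
  (mass xonly z <= mass yonly z -> U (retr z))); first exact: filterI nearX nearY.
move=> z [Nz gz]; split; first by exists s.
by have [yx|/ltW xy] := leP (mass yonly z) (mass xonly z); [exact: (Nz gz).1|exact: (Nz gz).2].
Qed.

Lemma retr_homotopy_jointly_continuous : jointly_continuous K K retr_homotopy.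
Proof.
apply: jointly_continuous_simplexwise => [s|s a t ga]; first exact: retr_homotopy_into_K.
have alc : (fun z : R * T => z.2) @ filter_prod (nbhs t) (within (geom_simplex s) (nbhs a))
  --> a by apply: cvg_trans cvg_snd _; exact: cvg_within.
apply: (cvg_retr_homotopy (X := X) (Y := Y) (v := v) alc _ ga cvg_fst).
by apply: (cvg_snd (F := nbhs t)); exact: withinT.
Qed.

End DeformationRetraction.

Theorem corollary9p4 (R : realType) (V : choiceType) (K : set {fset V})
  (X Y : set V) :
  is_simplicial_complex K -> is_clique K ->
  X `|` Y = vertices K ->
  let A := X `&` Y in
  let P := [set s : {fset V} | K s /\
              ((forall v, v \in s -> X v) \/ (forall v, v \in s -> Y v) \/
               (exists2 v, v \in s & A v))] in
  ((A !=set0) /\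
     (forall tau mu : {fset V}, edges K tau -> ~ P tau ->
        (forall v, v \in mu -> A v) -> (#|` mu|%fset <= 2)%N ->
        K (tau `|` mu)%fset)
   \/
   (exists v : V, A = [set v] /\
     (forall tau : {fset V}, edges K tau -> ~ P tau -> K (tau `|` [fset v]%fset)%fset))) ->
  inclusion_weak_equivalence R (full_sub K X `|` full_sub K Y) K.
Proof.
move=> HK Hcl Hcov A P hyp.
have straddling_edge x y : xonly X Y x -> yonly X Y y -> K [fset x; y]%fset ->
    edges K [fset x; y]%fset /\ ~ P [fset x; y]%fset.
  move=> xx yy Kxy; split; first exact: (conj Kxy (straddling_pair_card xx yy)).
  by rewrite /P /= => -[_]; exact: straddling_pair_mixed.
have [v [[Xv Yv] cone_edge]] : exists v, A v /\ forall x y w, xonly X Y x -> yonly X Y y ->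
    K [fset x; y]%fset -> A w -> K ([fset x; y] `|` [fset w; v])%fset.
  case: hyp => [[[v Av] cone2]|[v [Av cone1]]]; exists v.
    split=> // x y w xx yy Kxy Aw; have [exy nPxy] := straddling_edge x y xx yy Kxy.
    apply: cone2 => // [u|]; first by rewrite !inE => /orP[]/eqP->.
    by rewrite cardfs2; case: (_ != _).
  split=> [|x y w xx yy Kxy]; first by rewrite Av.
  rewrite Av => ->; have [exy nPxy] := straddling_edge x y xx yy Kxy.
  by rewrite fsetUid; exact: cone1.
have cone := straddling_cone HK Hcov Hcl Xv Yv cone_edge.
apply: (weak_equivalence_of_deformation (r := retr X Y v) (H := retr_homotopy X Y v)).
- exact: retr_jointly_continuous.
- exact: retr_homotopy_jointly_continuous.
- exact: retr_homotopy0.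
- exact: retr_homotopy1.
- exact: retr_homotopy_fixed.
Qed.
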